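(* Let $g\ge1$, $\alpha,\alpha_1,\dots,\alpha_{2g-1}\in\mathbb C$, $f_{g-1}(x)=\prod_{j=1}^{2g-1}(x-\alpha_j)=\sum_{i=0}^{2g-1}\tilde\mu_{4g-2-2i}x^i$ and $f_g(x)=(x-\alpha)^2f_{g-1}(x)=\sum_{i=0}^{2g+1}\mu_{4g+2-2i}x^i$ (with coefficients of indices outside these ranges set to $0$). Put $H_g(x_1,x_2)=\sum_{i=0}^g(x_1x_2)^i(2\mu_{4g+2-4i}+\mu_{4g-4i}(x_1+x_2))$ and $H_{g-1}(x_1,x_2)=\sum_{i=0}^{g-1}(x_1x_2)^i(2\tilde\mu_{4g-2-4i}+\tilde\mu_{4g-4-4i}(x_1+x_2))$. Then $$H_g(x_1,x_2)=(x_1-\alpha)(x_2-\alpha)H_{g-1}(x_1,x_2)+\alpha(x_1-x_2)^2\sum_{i=0}^{g-1}\tilde\mu_{4g-4-4i}x_1^ix_2^i.$$ *)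

From HB Require Import structures.
From mathcomp Require Import all_boot all_order all_algebra.
From mathcomp Require Import reals.
From mathcomp.real_closed Require Import complex.
Set Implicit Arguments. Unset Strict Implicit. Unset Printing Implicit Defensive.
Import Order.TTheory GRing.Theory Num.Theory.
Local Open Scope ring_scope.

(* Coefficient convention of the paper: for a polynomial
   p(x) = \sum_i c_(N - 2 i) x^i, the coefficient with index k is
   c_k = p`_((N - k)/2) when k is even and k <= N, and 0 otherwise
   (coefficients of p beyond its degree are 0 automatically). *)
Definition mu_coef (C : ringType) (p : {poly C}) (N k : nat) : C :=
  if odd k || (N < k)%N then 0 else p`_((N - k)./2).

Definition fgm1 (C : comRingType) (g : nat) (a : 'I_(2 * g - 1) -> C) : {poly C} :=
  \prod_(j < 2 * g - 1) ('X - (a j)%:P).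

Definition fg (C : comRingType) (g : nat) (al : C) (a : 'I_(2 * g - 1) -> C) : {poly C} :=
  ('X - al%:P) ^+ 2 * fgm1 a.

Definition mu (C : comRingType) (g : nat) (al : C) (a : 'I_(2 * g - 1) -> C) (k : nat) : C :=
  mu_coef (fg al a) (4 * g + 2) k.
Definition mut (C : comRingType) (g : nat) (a : 'I_(2 * g - 1) -> C) (k : nat) : C :=
  mu_coef (fgm1 a) (4 * g - 2) k.

Definition Hg (C : comRingType) (g : nat) (al : C) (a : 'I_(2 * g - 1) -> C) (x1 x2 : C) : C :=
  \sum_(0 <= i < g.+1) (x1 * x2) ^+ i *
     (2 * mu al a (4 * g + 2 - 4 * i) + mu al a (4 * g - 4 * i) * (x1 + x2)).

Definition Hgm1 (C : comRingType) (g : nat) (a : 'I_(2 * g - 1) -> C) (x1 x2 : C) : C :=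
  \sum_(0 <= i < g) (x1 * x2) ^+ i *
     (2 * mut a (4 * g - 2 - 4 * i) + mut a (4 * g - 4 - 4 * i) * (x1 + x2)).

From HB Require Import structures.
From mathcomp Require Import all_boot all_order all_algebra.
From mathcomp Require Import reals.
From mathcomp.real_closed Require Import complex.
From mathcomp Require Import zify ring.
Set Implicit Arguments. Unset Strict Implicit. Unset Printing Implicit Defensive.
Import Order.TTheory GRing.Theory Num.Theory.
Local Open Scope ring_scope.

(* Split a polynomial as f(x) = E(x^2) + x O(x^2) (MathComp's [even_poly] and
   [odd_poly]); then H(x1, x2) = 2 E(y) + t O(y) with y = x1 x2, t = x1 + x2,
   and the last sum of the statement is O(y).  Multiplying f by
   (x - a)^2 = x^2 - 2 a x + a^2 acts on the pair (E, O) by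
   E |-> (y + a^2) E - 2 a y O and O |-> (y + a^2) O - 2 a E, so the claim
   becomes a polynomial identity in y, t, E(y), O(y), using
   (x1 - a)(x2 - a) = y - a t + a^2 and (x1 - x2)^2 = t^2 - 4 y. *)

Section EvenOddParts.
Variable C : comNzRingType.
Implicit Types (p : {poly C}) (a x : C).

Lemma XsubC_sqrM a p :
  ('X - a%:P) ^+ 2 * p = p * 'X * 'X - (2 * a) *: (p * 'X) + a ^+ 2 *: p.
Proof. by rewrite -!mul_polyC rmorphM rmorphXn /= polyC_natr; ring. Qed.

Lemma even_poly_XsubC2M a p :
  even_poly (('X - a%:P) ^+ 2 * p) =
  ('X + (a ^+ 2)%:P) * even_poly p - (2 * a)%:P * 'X * odd_poly p.
Proof.
rewrite XsubC_sqrM.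
rewrite !raddfD raddfN /= !even_polyZ !even_polyMX odd_polyMX -!mul_polyC.
ring.
Qed.

Lemma odd_poly_XsubC2M a p :
  odd_poly (('X - a%:P) ^+ 2 * p) =
  ('X + (a ^+ 2)%:P) * odd_poly p - (2 * a)%:P * even_poly p.
Proof.
rewrite XsubC_sqrM.
rewrite !raddfD raddfN /= !odd_polyZ !odd_polyMX even_polyMX -!mul_polyC.
ring.
Qed.

Lemma horner_even_poly_wide n p x :
  (size p <= n.*2)%N -> (even_poly p).[x] = \sum_(i < n) p`_i.*2 * x ^+ i.
Proof. by move=> szp; rewrite (even_polyE szp) horner_poly. Qed.

Lemma horner_odd_poly_wide n p x :
  (size p <= n.*2)%N -> (odd_poly p).[x] = \sum_(i < n) p`_i.*2.+1 * x ^+ i.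
Proof. by move=> szp; rewrite (@odd_polyE _ n) ?horner_poly // ltnW. Qed.

End EvenOddParts.

Section PaperCoefficients.
Variable C : comNzRingType.
Implicit Types (p : {poly C}) (s t : C).

Lemma mu_coef_even p n i :
  (i < n)%N -> mu_coef p (4 * n - 2) (4 * n - 2 - 4 * i) = p`_i.*2.
Proof.
move=> lt_in; rewrite /mu_coef ifF; last by apply/negbTE; lia.
congr (p`_ _); lia.
Qed.

Lemma mu_coef_odd p n i :
  (i < n)%N -> mu_coef p (4 * n - 2) (4 * n - 4 - 4 * i) = p`_i.*2.+1.
Proof.
move=> lt_in; rewrite /mu_coef ifF; last by apply/negbTE; lia.
congr (p`_ _); lia.
Qed.

Lemma mu_coef_pair_sum p n s t : (size p <= n.*2)%N ->
  \sum_(0 <= i < n) s ^+ i *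
     (2 * mu_coef p (4 * n - 2) (4 * n - 2 - 4 * i)
      + mu_coef p (4 * n - 2) (4 * n - 4 - 4 * i) * t) =
  2 * (even_poly p).[s] + t * (odd_poly p).[s].
Proof.
move=> szp; rewrite (horner_even_poly_wide s szp) (horner_odd_poly_wide s szp).
rewrite !mulr_sumr -big_split big_mkord; apply: eq_bigr => i _.
by rewrite /= mu_coef_even ?mu_coef_odd //; ring.
Qed.

Lemma mu_coef_odd_sum p n s : (size p <= n.*2)%N ->
  \sum_(0 <= i < n) mu_coef p (4 * n - 2) (4 * n - 4 - 4 * i) * s ^+ i =
  (odd_poly p).[s].
Proof.
move=> szp; rewrite (horner_odd_poly_wide s szp) big_mkord.
by apply: eq_bigr => i _; rewrite mu_coef_odd.
Qed.

End PaperCoefficients.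

Section FactorizedPolynomials.
Variables (C : comNzRingType) (g : nat) (al : C) (a : 'I_(2 * g - 1) -> C).

Lemma size_fgm1 : size (fgm1 a) = (2 * g - 1).+1.
Proof. by rewrite /fgm1 -big_enum size_prod_XsubC size_enum_ord. Qed.

Hypothesis g_gt0 : (0 < g)%N.

Lemma size_fg_le : (size (fg al a) <= g.+1.*2)%N.
Proof.
apply: leq_trans (size_mul_leq _ _) _.
by rewrite size_exp_XsubC size_fgm1; lia.
Qed.

Lemma Hg_even_odd x1 x2 :
  Hg al a x1 x2 =
  2 * (even_poly (fg al a)).[x1 * x2] + (x1 + x2) * (odd_poly (fg al a)).[x1 * x2].
Proof.
rewrite /Hg /mu.
have -> : (4 * g + 2 = 4 * g.+1 - 2)%N by lia.
have -> : (4 * g = 4 * g.+1 - 4)%N by lia.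
exact: mu_coef_pair_sum size_fg_le.
Qed.

Lemma Hgm1_even_odd x1 x2 :
  Hgm1 a x1 x2 =
  2 * (even_poly (fgm1 a)).[x1 * x2] + (x1 + x2) * (odd_poly (fgm1 a)).[x1 * x2].
Proof. by apply: mu_coef_pair_sum; rewrite size_fgm1; lia. Qed.

Lemma sum_mut_odd x1 x2 :
  \sum_(0 <= i < g) mut a (4 * g - 4 - 4 * i) * x1 ^+ i * x2 ^+ i =
  (odd_poly (fgm1 a)).[x1 * x2].
Proof.
rewrite -(@mu_coef_odd_sum _ _ g); last by rewrite size_fgm1; lia.
by apply: eq_bigr => i _; rewrite exprMn mulrA.
Qed.

End FactorizedPolynomials.

Theorem lemma10 (R : realType) (g : nat) (hg : (1 <= g)%N)
  (al : R[i]) (a : 'I_(2 * g - 1) -> R[i]) (x1 x2 : R[i]) :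
  Hg al a x1 x2 =
    (x1 - al) * (x2 - al) * Hgm1 a x1 x2
    + al * (x1 - x2) ^+ 2 * \sum_(0 <= i < g) mut a (4 * g - 4 - 4 * i) * x1 ^+ i * x2 ^+ i.
Proof.
rewrite Hg_even_odd // Hgm1_even_odd // sum_mut_odd // /fg.
rewrite even_poly_XsubC2M odd_poly_XsubC2M !(hornerD, hornerN, hornerM, hornerX, hornerC).
ring.
Qed.
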